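(* A packed word $w$ is $212$-avoiding if and only if there is a generalized Stirling permutation $u$ with $\mathbf w(u)=w$.
   Context: A word $w=w_1\cdots w_n$ of positive integers is a packed word if its set of letters is $\{1,\dots,m\}$ for some $m\ge0$. It is $212$-avoiding if whenever $i<j<k$ and $w_i=w_k$ we have $w_j\ge w_i$. A planar tree is a rooted tree in which the children of each node are linearly ordered and every node is a leaf or has at least two children (an internal node). A generalized Stirling permutation of degree $n$ is a planar tree with $n+1$ leaves together with a bijection $\kappa$ from its set of internal nodes to $\{1,\dots,N\}$ ($N$ = number of internal nodes) such that the label of each internal node is smaller than the labels of its internal children. Its word $\mathbf w(u)$ is defined recursively: a leaf has empty word; a node $x$ with children $c_1,\dots,c_k$ (left to right) has word $\mathbf w(c_1)\,\kappa(x)\,\mathbf w(c_2)\,\kappa(x)\cdots\kappa(x)\,\mathbf w(c_k)$ (i.e. the label of $x$ is written in each of the $k-1$ gaps between its children), and $\mathbf w(u)$ is the word of the root. *)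

From mathcomp Require Import all_boot.
Set Implicit Arguments. Unset Strict Implicit. Unset Printing Implicit Defensive.

Definition packed (w : seq nat) : Prop :=
  exists m : nat, forall x : nat, (x \in w) = (x \in iota 1 m).

Definition avoids212 (w : seq nat) : Prop :=
  forall i j k : nat, i < j -> j < k -> k < size w ->
    nth 0 w i = nth 0 w k -> nth 0 w i <= nth 0 w j.

Inductive ltree : Type :=
  | LLeaf : ltree
  | LNode : nat -> seq ltree -> ltree.

Fixpoint labels (t : ltree) : seq nat :=
  match t with
  | LLeaf => [::]
  | LNode k cs => k :: flatten (map labels cs)
  end.

Fixpoint wf_increasing (t : ltree) : bool :=
  match t with
  | LLeaf => true
  | LNode k cs =>
      [&& 1 < size cs,
          all (fun c => match c with LLeaf => true | LNode j _ => k < j end) cs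
        & all wf_increasing cs]
  end.

(* A generalized Stirling permutation: a planar tree (every node is a leaf or
   has >= 2 children) with a bijection kappa from internal nodes to
   {1,...,N} (N = number of internal nodes), increasing along edges. *)
Definition gen_stirling (t : ltree) : Prop :=
  wf_increasing t /\ perm_eq (labels t) (iota 1 (size (labels t))).

Fixpoint join_with (k : nat) (ws : seq (seq nat)) : seq nat :=
  match ws with
  | [::] => [::]
  | [:: w] => w
  | w :: ws' => w ++ k :: join_with k ws'
  end.

Fixpoint tword (t : ltree) : seq nat :=
  match t with
  | LLeaf => [::]
  | LNode k cs => join_with k (map tword cs)
  end.

(* We work with the pattern view of avoidance: w avoids 212 iff it has no
   subsequence a b a with b < a (avoids212P).  The central fact is about the
   word w_1 k w_2 k ... k w_r of a node: when k is smaller than every letter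
   of the blocks w_i, it avoids 212 iff every block does and the blocks are
   pairwise letter-disjoint (join_with_no212).
   - Trees to words: by induction on the tree, using that in an increasing
     tree the root label is the minimum (root_label_min), that the word of a
     tree has exactly its labels as letters (tword_labels), and a
     characterization of well-formed nodes with distinct labels
     (wf_uniq_node); this gives tree_no212.
   - Words to trees: split a 212-avoiding word at its smallest letter m
     (split_at_min), build trees for the shorter blocks by induction, and
     hang them below a root labelled m (no212_tree). *)

From HB Require Import structures.
From mathcomp Require Import all_boot zify.
Set Implicit Arguments. Unset Strict Implicit. Unset Printing Implicit Defensive.

Definition no212 (w : seq nat) : Prop :=
  forall a b, b < a -> ~~ subseq [:: a; b; a] w.

Lemma subseq_consP (T : eqType) (x0 : T) {y : T} {s w : seq T} :
  subseq (y :: s) w <->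
  exists2 i, i < size w /\ nth x0 w i = y & subseq s (drop i.+1 w).
Proof.
split.
- elim: w => [|x w IH] //=; case: eqP => [<- sub_s | _ /IH [i [lt_i nth_i] sub_s]].
    by exists 0; rewrite ?drop0.
  by exists i.+1.
- case=> i [lt_i nth_i] sub_s.
  rewrite -(cat_take_drop i w) (drop_nth x0 lt_i) -[y :: s]cat0s.
  by apply: cat_subseq; rewrite ?sub0seq //= nth_i eqxx.
Qed.

Lemma subseq3P (T : eqType) (x0 : T) {x y z : T} {w : seq T} :
  subseq [:: x; y; z] w <->
  exists i j k, [/\ i < j < k, k < size w &
                    [/\ nth x0 w i = x, nth x0 w j = y & nth x0 w k = z]].
Proof.
split.
- case/(subseq_consP x0) => i [lt_i wi] /(subseq_consP x0) [j [lt_j wj]].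
  case/(subseq_consP x0) => k [lt_k wk] _.
  rewrite drop_drop in lt_k wk; rewrite !size_drop !nth_drop in lt_j wj lt_k wk.
  exists i, (i.+1 + j), (j.+1 + i.+1 + k); rewrite wi wj wk; split => //; lia.
- case=> i [j [k [/andP [ij jk] lt_k [wi wj wk]]]].
  apply/(subseq_consP x0); exists i; first by split => //; lia.
  apply/(subseq_consP x0); exists (j - i.+1).
    by rewrite size_drop nth_drop subnKC //; split => //; lia.
  rewrite drop_drop sub1seq; apply/(nthP x0); exists (k - j.+1).
    by rewrite !size_drop; lia.
  by rewrite !nth_drop; have -> : (j - i.+1).+1 + i.+1 + (k - j.+1) = k by lia.
Qed.

Lemma avoids212P w : avoids212 w <-> no212 w.
Proof.
split.
- move=> av a b lt_ba; apply/negP => /(subseq3P 0) [i [j [k [/andP [ij jk] lt_k]]]].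
  case=> wi wj wk; move: (av i j k ij jk lt_k).
  by rewrite wi wj wk leqNgt lt_ba => /(_ erefl).
- move=> av i j k ij jk lt_k eq_ik; rewrite leqNgt; apply/negP => lt_ji.
  case/negP: (av _ _ lt_ji); apply/(subseq3P 0).
  by exists i, j, k; rewrite ij jk eq_ik.
Qed.

Lemma no212_subseq u w : subseq u w -> no212 w -> no212 u.
Proof.
by move=> sub_uw av a b lt_ba; apply: contra (av a b lt_ba) => /subseq_trans; apply.
Qed.

Lemma subseq_catP (T : eqType) (s u v : seq T) : subseq s (u ++ v) ->
  exists s1 s2, [/\ s = s1 ++ s2, subseq s1 u & subseq s2 v].
Proof.
case/subseqP => m size_m ->.
exists (mask (take (size u) m) u), (mask (drop (size u) m) v).
rewrite -mask_cat ?cat_take_drop ?mask_subseq //.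
by rewrite size_takel // size_m size_cat leq_addr.
Qed.

(* Gluing two 212-avoiding words without common letters avoids 212: an
   occurrence of a b a cannot straddle the junction, as its outer letters
   are equal. *)
Lemma no212_cat u v : no212 u -> no212 v ->
  {in u, forall x, x \notin v} -> no212 (u ++ v).
Proof.
move=> av_u av_v disj a b lt_ba; apply/negP => /subseq_catP [s1 [s2 [E sub1 sub2]]].
case: s1 E sub1 => [|x1 [|x2 [|x3 [|x4 s1]]]] //= E.
- by rewrite -E (negPf (av_v a b lt_ba)) in sub2.
- case: E => <- E; rewrite sub1seq => a_u.
  have a_v : a \in v by apply: (mem_subseq sub2); rewrite -E !inE eqxx orbT.
  by rewrite (negPf (disj a a_u)) in a_v.
- case: E => <- _ E sub1; rewrite -E sub1seq in sub2.
  have a_u : a \in u by apply: (mem_subseq sub1); rewrite mem_head.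
  by rewrite (negPf (disj a a_u)) in sub2.
- by case: E => <- <- <- _; rewrite (negPf (av_u a b lt_ba)).
Qed.

(* A letter not exceeding any letter of a 212-avoiding word can be put in
   front of it: it can only play the role of an outer letter a, and no
   smaller letter b follows it. *)
Lemma no212_cons_min k v : no212 v -> all (leq k) v -> no212 (k :: v).
Proof.
move=> av_v ge_k a b lt_ba /=; case: eqP => [eq_ak | _]; last exact: av_v.
apply/negP => sub_v; have : b \in v.
  by rewrite -sub1seq (subseq_trans _ sub_v) // sub1seq mem_head.
by move/(allP ge_k); rewrite -eq_ak leqNgt lt_ba.
Qed.

Fixpoint disjoint_blocks (T : eqType) (ss : seq (seq T)) : bool :=
  if ss is s :: ss' then ~~ has (fun x => x \in s) (flatten ss') && disjoint_blocks ss'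
  else true.

Lemma uniq_flatten_blocks (T : eqType) (ss : seq (seq T)) :
  uniq (flatten ss) = all uniq ss && disjoint_blocks ss.
Proof.
elim: ss => //= s ss IH; rewrite cat_uniq IH.
by case: (uniq s); case: (all uniq ss); rewrite ?andbF.
Qed.

Lemma eq_mem_flatten_map (T A : eqType) (f g : A -> seq T) (xs : seq A) :
  {in xs, forall x, f x =i g x} -> flatten (map f xs) =i flatten (map g xs).
Proof.
elim: xs => //= x xs IH eq_fg y; rewrite !mem_cat eq_fg ?mem_head // IH //.
by move=> z z_xs; apply: eq_fg; rewrite inE z_xs orbT.
Qed.

Lemma eq_disjoint_blocks_map (T A : eqType) (f g : A -> seq T) (xs : seq A) :
  {in xs, forall x, f x =i g x} ->
  disjoint_blocks (map f xs) = disjoint_blocks (map g xs).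
Proof.
elim: xs => //= x xs IH eq_fg.
have eq_fg' : {in xs, forall z, f z =i g z}.
  by move=> z z_xs; apply: eq_fg; rewrite inE z_xs orbT.
rewrite IH // (eq_has_r (eq_mem_flatten_map eq_fg')).
by rewrite (eq_has (eq_fg x (mem_head x xs))).
Qed.

Lemma join_with_sub k ws : {subset join_with k ws <= k :: flatten ws}.
Proof.
elim: ws => [|s [|s' ws] IH] x //; first by rewrite /= cats0 inE orbC => ->.
rewrite -[join_with _ _]/(s ++ k :: join_with k (s' :: ws)) mem_cat inE.
case/or3P => [xs | xk | /IH]; rewrite /= !inE !mem_cat ?xs ?xk ?orbT //.
by case/orP => ->; rewrite ?orbT.
Qed.

Lemma flatten_sub_join_with k ws : {subset flatten ws <= join_with k ws}.
Proof.
elim: ws => [|s [|s' ws] IH] x //=; first by rewrite cats0.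
rewrite mem_cat => /orP [xs | xf]; first by rewrite mem_cat xs.
by rewrite mem_cat inE IH ?orbT.
Qed.

Lemma mem_join_with_two k ws : 1 < size ws ->
  join_with k ws =i k :: flatten ws.
Proof.
case: ws => [|s [|s' ws]] // _ x; rewrite inE.
apply/idP/idP => [/join_with_sub // | /orP [/eqP -> | /flatten_sub_join_with //]].
by rewrite /= mem_cat mem_head orbT.
Qed.

Lemma block_subseq_join_with k ws s : s \in ws -> subseq s (join_with k ws).
Proof.
elim: ws => [|s' [|s'' ws] IH] //=; first by rewrite inE => /eqP ->.
rewrite inE => /predU1P [-> | s_ws]; first exact: prefix_subseq.
by rewrite (subseq_trans (IH s_ws)) // (subseq_trans (subseq_cons _ k)) ?suffix_subseq.
Qed.

(* Key lemma: when k is smaller than every letter of the blocks, the word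
   w_1 k w_2 ... k w_r avoids 212 exactly when every block avoids 212 and
   the blocks are letter-disjoint (a letter x repeated across a separator k
   would give the pattern x k x). *)
Lemma join_with_no212 k ws : {in flatten ws, forall x, k < x} ->
  no212 (join_with k ws) <-> {in ws, forall s, no212 s} /\ disjoint_blocks ws.
Proof.
elim: ws => [|s [|s' ws] IH] gt_k.
- by split=> // _ a b _.
- split=> [av_s | [av _]]; last by apply: av; rewrite mem_head.
  by split=> [t /[1!inE] /eqP -> | ] //=; rewrite andbT; apply/hasPn.
have gt_k' : {in flatten (s' :: ws), forall x, k < x}.
  by move=> x x_ws; apply: gt_k; rewrite [flatten _]/= mem_cat x_ws orbT.
have gt_k_s : {in s, forall x, k < x}.
  by move=> x x_s; apply: gt_k; rewrite [flatten _]/= mem_cat x_s.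
set J := join_with k (s' :: ws).
have J_sub : {subset J <= k :: flatten (s' :: ws)} := @join_with_sub k (s' :: ws).
rewrite -[join_with _ _]/(s ++ k :: J).
rewrite -[disjoint_blocks _]/(~~ has (fun x => x \in s) (flatten (s' :: ws))
                              && disjoint_blocks (s' :: ws)).
split=> [av | [av /andP [disj_s disj_ws]]].
- have av_J : no212 J.
    exact: no212_subseq (subseq_trans (subseq_cons J k) (suffix_subseq s _)) av.
  have [av_ws ->] := (IH gt_k').1 av_J; rewrite andbT; split.
    move=> t /[1!inE] /predU1P [-> | t_ws]; last exact: av_ws.
    exact: no212_subseq (prefix_subseq _ _) av.
  apply/hasPn => x x_ws; apply/negP => x_s.
  case/negP: (av x k (gt_k_s x x_s)).
  rewrite -[[:: x; k; x]]/([:: x] ++ [:: k; x]) cat_subseq ?sub1seq //=.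
  by rewrite eqxx sub1seq flatten_sub_join_with.
- have av_J : no212 J.
    by apply/(IH gt_k'); split=> // t t_ws; apply: av; rewrite inE t_ws orbT.
  apply: no212_cat; first by apply: av; rewrite mem_head.
    apply: no212_cons_min av_J _; apply/allP => x /J_sub /predU1P [-> // | ].
    by move/gt_k'/ltnW.
  move=> x x_s; rewrite inE gtn_eqF ?gt_k_s //=; apply/negP.
  case/J_sub/predU1P => [x_k | x_ws]; first by move: (gt_k_s x x_s); rewrite x_k ltnn.
  by move/hasPn: disj_s => /(_ x x_ws); rewrite x_s.
Qed.

Lemma split_at_letter k w :
  exists ws, join_with k ws = w /\ all (fun s => k \notin s) ws.
Proof.
elim: w => [|x w [ws [<- k_ws]]]; first by exists [::].
have [-> | ne_xk] := eqVneq x k.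
  by case: ws k_ws => [|s ws] k_ws; [exists [:: [::]; [::]] | exists ([::] :: s :: ws)].
case: ws k_ws => [_ | s ws /andP [k_s k_ws]].
  by exists [:: [:: x]]; split; rewrite //= andbT inE eq_sym.
exists ((x :: s) :: ws); split; first by case: ws {k_ws}.
by apply/andP; split; rewrite // inE negb_or k_s andbT eq_sym.
Qed.

(* Labelled planar trees form a countable type, via the generic encoding
   into GenTree; this gives the membership predicate c \in cs on children. *)
Fixpoint ltree_code (t : ltree) : GenTree.tree unit :=
  if t is LNode k cs then GenTree.Node k (map ltree_code cs) else GenTree.Leaf tt.

Fixpoint ltree_decode (c : GenTree.tree unit) : ltree :=
  if c is GenTree.Node k cs then LNode k (map ltree_decode cs) else LLeaf.

Fixpoint ltree_codeK (t : ltree) : ltree_decode (ltree_code t) = t :=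
  match t with
  | LLeaf => erefl
  | LNode k cs => f_equal (LNode k)
      ((fix codeK_children cs : map ltree_decode (map ltree_code cs) = cs :=
          if cs is c :: cs' then f_equal2 cons (ltree_codeK c) (codeK_children cs')
          else erefl) cs)
  end.

HB.instance Definition _ := Countable.copy ltree (can_type ltree_codeK).

(* Structural induction on trees, with a hypothesis for every child.  The
   empty-children case is closed by hand: generic automation could invoke
   the not yet guarded recursive hypothesis. *)
Lemma ltree_children_ind (P : ltree -> Prop) :
  P LLeaf -> (forall k cs, {in cs, forall c, P c} -> P (LNode k cs)) ->
  forall t, P t.
Proof.
move=> P_leaf P_node; fix IH 1; case=> [|k cs]; first exact: P_leaf.
apply: P_node; elim: cs => [|d cs IHcs] c; first (rewrite in_nil => /notF []).
by rewrite inE => /predU1P [-> | /IHcs].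
Qed.

Definition root_label (t : ltree) : nat := if t is LNode k _ then k else 0.

Lemma root_label_min t : wf_increasing t -> {in labels t, forall x, root_label t <= x}.
Proof.
elim/ltree_children_ind: t => // k cs IH /and3P [_ /allP roots_gt /allP wf_cs] x.
rewrite inE => /predU1P [-> // | /flattenP [l /mapP [c c_cs ->] x_c]].
have := IH c c_cs (wf_cs c c_cs) x x_c; move: (roots_gt c c_cs) x_c.
by case: c {c_cs} => //= j _ lt_kj _ /(leq_trans (ltnW lt_kj)).
Qed.

(* Since every internal node has at least two children, its label occurs in
   the word: the letters of the word are exactly the labels. *)
Lemma tword_labels t : wf_increasing t -> tword t =i labels t.
Proof.
elim/ltree_children_ind: t => // k cs IH /and3P [two _ /allP wf_cs] x.
rewrite /= mem_join_with_two ?size_map // !inE (eq_mem_flatten_map (g := labels)) //.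
by move=> c c_cs; apply: IH (wf_cs c c_cs).
Qed.

Lemma wf_uniq_node k cs :
  1 < size cs -> all wf_increasing cs -> all uniq (map labels cs) ->
  wf_increasing (LNode k cs) && uniq (labels (LNode k cs)) =
  all (fun x => k < x) (flatten (map labels cs)) && disjoint_blocks (map labels cs).
Proof.
move=> two /allP wf_cs uniq_cs.
rewrite /= two (introT allP wf_cs) uniq_flatten_blocks uniq_cs !andbT /= andbA.
congr (_ && _); apply/andP/allP => [[/allP roots_gt k_below] x | gt_k].
  case/flattenP => _ /mapP [c c_cs ->]; move: (roots_gt c c_cs).
  case: c c_cs => // j cs' c_cs lt_kj x_c.
  exact: leq_trans lt_kj (root_label_min (wf_cs _ c_cs) x_c).
split; last by apply/negP => /gt_k; rewrite ltnn.
apply/allP => -[|j cs'] c_cs //; apply: gt_k.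
by apply/flattenP; exists (labels (LNode j cs')); rewrite ?map_f ?mem_head.
Qed.

Lemma tree_no212 t : wf_increasing t -> uniq (labels t) -> no212 (tword t).
Proof.
elim/ltree_children_ind: t => [_ _ a b _ // | k cs IH wf_t uniq_t].
have /and3P [two _ /allP wf_cs] := wf_t.
have tword_cs : {in cs, forall c, labels c =i tword c}.
  by move=> c c_cs x; rewrite (tword_labels (wf_cs c c_cs)).
have uniq_cs : all uniq (map labels cs).
  by move: uniq_t; rewrite /= uniq_flatten_blocks => /andP [_ /andP []].
move: (wf_uniq_node k two (introT allP wf_cs) uniq_cs); rewrite wf_t uniq_t.
case/esym/andP => /allP gt_k disj; apply/join_with_no212.
  by move=> x; rewrite -(eq_mem_flatten_map tword_cs); apply: gt_k.
split; last by rewrite -(eq_disjoint_blocks_map tword_cs).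
move=> _ /mapP [c c_cs ->]; apply: IH (wf_cs c c_cs) _ => //.
by move/allP: uniq_cs; apply; rewrite map_f.
Qed.

Lemma split_at_min w : w != [::] ->
  exists m ws, [/\ join_with m ws = w, 1 < size ws,
                   {in flatten ws, forall x, m < x} & {in ws, forall s, size s < size w}].
Proof.
move=> ne_w; have w_ex : exists x, x \in w.
  by case: w ne_w => // x w' _; exists x; rewrite mem_head.
case: (ex_minnP w_ex) => m m_w m_min.
have [ws [join_ws /allP m_ws]] := split_at_letter m w.
have sub_ws : {in ws, forall s, subseq s w}.
  by move=> s s_ws; rewrite -join_ws block_subseq_join_with.
have m_notin : {in ws, forall s, m \in s -> False}.
  by move=> s s_ws m_s; move/negP: (m_ws s s_ws).
exists m, ws; split => //.
- case: ws join_ws m_ws {sub_ws m_notin} => [|s [|s' ws]] //= join_ws m_ws.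
    by rewrite -join_ws in m_w.
  by move: (m_ws s (mem_head _ _)); rewrite join_ws m_w.
- move=> x /flattenP [s s_ws x_s]; rewrite ltn_neqAle m_min ?andbT.
    by apply/eqP => eq_mx; apply: (m_notin s s_ws); rewrite eq_mx.
  exact: (mem_subseq (sub_ws s s_ws)).
- move=> s s_ws; rewrite (ltn_leqif (size_subseq_leqif (sub_ws s s_ws))).
  by apply/eqP => eq_sw; apply: (m_notin s s_ws); rewrite eq_sw.
Qed.

Lemma map_preimages (A B : eqType) (f : A -> B) (P : A -> Prop) (bs : seq B) :
  {in bs, forall b, exists2 a, P a & f a = b} ->
  exists2 xs, map f xs = bs & {in xs, forall a, P a}.
Proof.
elim: bs => [_ | b bs IH pre_bs]; first by exists [::].
have [a Pa fa] := pre_bs b (mem_head b bs).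
have [|xs fxs Pxs] := IH; first by move=> b' b'_bs; apply: pre_bs; rewrite inE b'_bs orbT.
by exists (a :: xs); [rewrite /= fa fxs | move=> a' /predU1P [-> | /Pxs]].
Qed.

(* Every 212-avoiding word is the word of an increasing tree with distinct
   labels: split at the smallest letter, build the subtrees of the blocks by
   induction, and hang them below a root carrying that letter. *)
Lemma no212_tree w : no212 w ->
  exists2 t, wf_increasing t && uniq (labels t) & tword t = w.
Proof.
have [n] := ubnP (size w); elim: n w => // n IH w size_w av_w.
have [-> | ne_w] := eqVneq w [::]; first by exists LLeaf.
have [m [ws [join_ws two gt_m shorter]]] := split_at_min ne_w.
have [av_ws disj_ws] : {in ws, forall s, no212 s} /\ disjoint_blocks ws.
  by apply/(join_with_no212 gt_m); rewrite join_ws.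
have [|cs tword_cs good_cs] := @map_preimages _ _ tword
  (fun c => wf_increasing c && uniq (labels c)) ws.
  move=> s s_ws; apply: IH (av_ws s s_ws).
  exact: leq_trans (shorter s s_ws) size_w.
have labels_cs : {in cs, forall c, tword c =i labels c}.
  by move=> c /good_cs /andP [wf_c _]; apply: tword_labels.
exists (LNode m cs); last by rewrite /= tword_cs.
rewrite wf_uniq_node -?(eq_disjoint_blocks_map labels_cs).
- rewrite tword_cs disj_ws andbT; apply/allP => x.
  by rewrite -(eq_mem_flatten_map labels_cs) tword_cs; apply: gt_m.
- by rewrite -(size_map tword) tword_cs.
- by apply/allP => c /good_cs /andP [].
- by apply/allP => _ /mapP [c /good_cs /andP [_ uniq_c] ->].
Qed.

(* For a packed word the labels of a tree with word w are exactly 1..N, so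
   generalized Stirling permutations are the increasing trees with distinct
   labels; the two directions are no212_tree and tree_no212. *)
Theorem mainTheorem4 (w : seq nat) :
  packed w -> (avoids212 w <-> exists u : ltree, gen_stirling u /\ tword u = w).
Proof.
move=> [N packed_w]; rewrite avoids212P; split.
- case/no212_tree => t /andP [wf_t uniq_t] tword_t; exists t; split => //; split => //.
  have labels_t : labels t =i iota 1 N.
    by move=> x; rewrite -tword_labels // tword_t packed_w.
  have perm_t := uniq_perm uniq_t (iota_uniq 1 N) labels_t.
  by rewrite (perm_size perm_t) size_iota.
- case=> u [[wf_u perm_u] <-]; apply: tree_no212 wf_u _.
  by rewrite (perm_uniq perm_u) iota_uniq.
Qed.
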